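(* For every $n\ge 1$, $\chi_{lc}(K_n)=n$.
   Context: Graphs are finite, loopless, with symmetric edge sets; $K_c$ is the complete graph on $c$ vertices; write $v\sim w$ when $(v,w)$ is an edge. For graphs $G,H$, the locally commuting algebra $\mathcal A_{lc}(G,H)$ is the unital complex algebra generated by elements $e_{v,x}$ ($v\in V(G)$, $x\in V(H)$) subject to the relations: $\sum_{x\in V(H)}e_{v,x}=1$ for all $v$; $e_{v,x}^2=e_{v,x}$; $e_{v,x}e_{v,y}=0$ for $x\neq y$; $e_{v,x}e_{w,y}=0$ whenever $v\sim w$ and $x\not\sim y$ (in particular when $x=y$); and $e_{v,x}e_{w,y}=e_{w,y}e_{v,x}$ whenever $v\sim w$. (Equivalently it is the quotient of the group $*$-algebra of the free product of $|V(G)|$ cyclic groups of order $|V(H)|$ by the ideal generated by the products of spectral projections forbidden by the graph homomorphism game together with the commutators $[e_{v,x},e_{w,y}]$ for $v\sim w$.) Define $\chi_{lc}(G)=\min\{c:\mathcal A_{lc}(G,K_c)\neq 0\}$. *)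

From HB Require Import structures.
From mathcomp Require Import all_boot all_algebra.
From mathcomp Require Import complex Rstruct.
Set Implicit Arguments. Unset Strict Implicit. Unset Printing Implicit Defensive.
Import GRing.Theory.
Local Open Scope ring_scope.

Definition Cplx : numClosedFieldType := complex Rdefinitions.R.

Definition is_graph (T : finType) (adj : rel T) : Prop :=
  irreflexive adj /\ symmetric adj.

Definition Kadj (c : nat) : rel 'I_c := fun i j => i != j.

Definition lc_relations (TG : finType) (adjG : rel TG)
    (TH : finType) (adjH : rel TH) (B : algType Cplx) (e : TG -> TH -> B) : Prop :=
  [/\ (forall v, \sum_(x : TH) e v x = 1),
      (forall v x, e v x * e v x = e v x),
      (forall v x y, x != y -> e v x * e v y = 0),
      (forall v w x y, adjG v w -> ~~ adjH x y -> e v x * e w y = 0)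
    & (forall v w x y, adjG v w -> e v x * e w y = e w y * e v x)].

(* A_lc(G,H) <> 0.  A_lc(G,H) is the universal unital complex algebra generated
   by the e_{v,x} subject to the relations above; it is nonzero iff there is
   some unital associative complex algebra B with 1 <> 0 containing a family
   satisfying these relations (take B = A_lc(G,H) itself for one direction, and
   the universal morphism A_lc(G,H) -> B for the other). *)
Definition Alc_nonzero (TG : finType) (adjG : rel TG)
    (TH : finType) (adjH : rel TH) : Prop :=
  exists (B : algType Cplx) (e : TG -> TH -> B),
    (1 : B) != 0 /\ lc_relations adjG adjH e.

Definition chi_lc_eq (TG : finType) (adjG : rel TG) (c : nat) : Prop :=
  Alc_nonzero adjG (@Kadj c) /\
  (forall c', (c' < c)%N -> ~ Alc_nonzero adjG (@Kadj c')).

(** The identity map K_n -> K_n is a graph homomorphism, and every graph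
    homomorphism G -> H yields a one-dimensional commutative representation of
    A_lc(G,H), so chi_lc(K_n) <= n.  Conversely, let vs be a clique of G and A
    a set of colours, and consider the product over v in vs of the partial
    sums s_v(A) = sum_{x in A} e_{v,x}.  Adjacent vertices commute and cannot
    share a colour, so multiplying the product over the remaining vertices by
    e_{v,x} does not change it when x is deleted from A; by induction the
    product vanishes as soon as #|A| < size vs.  Taking for A all c colours,
    every partial sum is 1, hence A_lc(G, K_c) = 0 whenever G has a clique of
    size larger than c. *)

From mathcomp Require Import all_boot all_algebra.
Set Implicit Arguments. Unset Strict Implicit. Unset Printing Implicit Defensive.
Import GRing.Theory.
Local Open Scope ring_scope.

Section GraphHomRepresentation.

Variables (TG TH : finType) (adjG : rel TG) (adjH : rel TH) (f : TG -> TH).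
Hypothesis f_hom : {homo f : v w / adjG v w >-> adjH v w}.

Lemma graph_hom_lc_relations (B : comAlgType Cplx) :
  lc_relations adjG adjH (fun v x => (f v == x)%:R : B).
Proof.
split=> [v | v x | v x y neq_xy | v w x y adj_vw | v w x y _].
- rewrite (bigD1 (f v)) //= eqxx big1 ?addr0 // => y.
  by rewrite eq_sym => /negbTE ->.
- by rewrite -natrM mulnb andbb.
- by rewrite -natrM mulnb; case: eqP => // ->; rewrite (negbTE neq_xy).
- have := f_hom adj_vw; rewrite -natrM mulnb.
  by do 2![case: eqP => // ->] => ->.
- exact: mulrC.
Qed.

Lemma graph_hom_Alc_nonzero : Alc_nonzero adjG adjH.
Proof.
exists Cplx^o, (fun v x => (f v == x)%:R).
by split; [exact: oner_neq0 | exact: graph_hom_lc_relations].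
Qed.

End GraphHomRepresentation.

Section CliqueColourProduct.

Variables (TG TH : finType) (adjG : rel TG) (R : pzRingType) (e : TG -> TH -> R).
Hypothesis e_adj_orth : forall v w x, adjG v w -> e v x * e w x = 0.
Hypothesis e_adj_comm : forall v w x y, adjG v w -> e v x * e w y = e w y * e v x.

Definition colour_prod (vs : seq TG) (A : {set TH}) : R :=
  \prod_(v <- vs) \sum_(x in A) e v x.

Lemma mul_sum_setD1 v w x (A : {set TH}) : adjG v w ->
  e v x * \sum_(y in A) e w y = (\sum_(y in A :\ x) e w y) * e v x.
Proof.
move=> adj_vw; rewrite mulr_sumr mulr_suml.
transitivity (\sum_(y in A :\ x) e v x * e w y).
  case: (boolP (x \in A)) => [Ax | nAx].
    rewrite (bigD1 x) //= e_adj_orth // add0r.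
    by apply: eq_bigl => y; rewrite in_setD1 andbC.
  apply: eq_bigl => y; rewrite in_setD1.
  by case: eqP => // ->; rewrite (negbTE nAx).
by apply: eq_bigr => y _; apply: e_adj_comm.
Qed.

Lemma mul_colour_prod_setD1 v x vs A : all (adjG v) vs ->
  e v x * colour_prod vs A = e v x * colour_prod vs (A :\ x).
Proof.
elim: vs => [|w vs IHvs]; first by rewrite /colour_prod !big_nil.
rewrite /= => /andP[adj_vw adj_vvs]; rewrite /colour_prod !big_cons.
rewrite !mulrA !mul_sum_setD1 // setDDl setUid -!mulrA.
by rewrite -/(colour_prod vs A) -/(colour_prod vs _) IHvs.
Qed.

Lemma colour_prod_eq0 vs (A : {set TH}) :
  pairwise adjG vs -> (#|A| < size vs)%N -> colour_prod vs A = 0.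
Proof.
elim: vs A => [|v vs IHvs] A //= /andP[adj_v clique].
move=> small_A; rewrite /colour_prod big_cons mulr_suml big1 // => x Ax.
rewrite -/(colour_prod vs A) mul_colour_prod_setD1 // IHvs ?mulr0 //.
by move: small_A; rewrite (cardsD1 x A) Ax.
Qed.

Lemma colour_prod_setT vs : (forall v, \sum_x e v x = 1) ->
  colour_prod vs [set: TH] = 1.
Proof.
move=> sum_e1; rewrite /colour_prod big1_seq // => v _.
by rewrite -(sum_e1 v); apply: eq_bigl => x; rewrite inE.
Qed.

End CliqueColourProduct.

Lemma Alc_nonzero_clique_size (TG : finType) (adjG : rel TG) c (vs : seq TG) :
  Alc_nonzero adjG (@Kadj c) -> pairwise adjG vs -> (size vs <= c)%N.
Proof.
move=> [B [e [nz1 [sum_e1 _ _ e_adj e_comm]]]] clique.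
have e_orth v w x : adjG v w -> e v x * e w x = 0.
  by move=> adj_vw; apply: e_adj => //; rewrite /Kadj /= eqxx.
rewrite leqNgt; apply: contra nz1 => big_clique; apply/eqP.
rewrite -(colour_prod_setT vs sum_e1) (colour_prod_eq0 e_orth e_comm) //.
by rewrite cardsT card_ord.
Qed.

Theorem mainTheorem2 (n : nat) : (1 <= n)%N -> chi_lc_eq (@Kadj n) n.
Proof.
move=> _; split; first exact: (graph_hom_Alc_nonzero (f := id)).
have clique_In : pairwise (@Kadj n) (enum 'I_n) by rewrite -uniq_pairwise enum_uniq.
move=> c lt_cn /Alc_nonzero_clique_size/(_ clique_In).
by rewrite size_enum_ord leqNgt lt_cn.
Qed.
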